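(* If $S,T\in \mathcal{B}_{A}(\mathcal{H})$, then $$d\omega _{A_{0}}\left( \begin{bmatrix} S & T \\ T & S \end{bmatrix} \right) =d\omega _{A_{0}}\left( \begin{bmatrix} S-T & 0 \\ 0 & S+T \end{bmatrix} \right).$$ In particular, $$d\omega _{A_{0}}\left( \begin{bmatrix} 0 & S \\ S & 0 \end{bmatrix} \right) =d\omega _{A}\left( S\right).$$
   Context: $\mathcal{H}$ is a complex Hilbert space and $A\in\mathcal{B}(\mathcal{H})$ is a positive operator; $\langle x,z\rangle_A=\langle Ax,z\rangle$ and $\|z\|_A=\|A^{1/2}z\|$. $\mathcal{B}_A(\mathcal{H})$ denotes the set of bounded operators $S$ on $\mathcal{H}$ admitting an $A$-adjoint, i.e. with $\mathcal{R}(S^*A)\subseteq\mathcal{R}(A)$. The $A$-Davis-Wielandt radius is $d\omega_A(S)=\sup\{(|\langle Sz,z\rangle_A|^2+\|Sz\|_A^4)^{1/2}: z\in\mathcal{H},\ \|z\|_A=1\}$. $A_0=\begin{bmatrix} A&0\\0&A\end{bmatrix}$ is the positive operator on $\mathcal{H}\oplus\mathcal{H}$, inducing $\langle x,z\rangle_{A_0}=\langle x_1,z_1\rangle_A+\langle x_2,z_2\rangle_A$ for $x=(x_1,x_2)$, $z=(z_1,z_2)$, and $d\omega_{A_0}$ is the corresponding $A_0$-Davis-Wielandt radius on $\mathcal{H}\oplus\mathcal{H}$. *)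

From mathcomp Require Import all_boot all_algebra.
From mathcomp Require Import complex.
From mathcomp Require Import all_classical reals constructive_ereal ereal.
Import GRing.Theory Num.Theory.

Set Implicit Arguments.
Unset Strict Implicit.
Unset Printing Implicit Defensive.

Local Open Scope ring_scope.
Local Open Scope complex_scope.
Local Open Scope classical_set_scope.

Section Hilbert.
Variable R : realType.

Section OnV.
Variable V : lmodType R[i].
Variable ip : V -> V -> R[i].

Definition is_inner_product : Prop :=
  (forall (a : R[i]) (x y z : V), ip (a *: x + y) z = a * ip x z + ip y z) /\
  (forall x y : V, ip y x = (ip x y)^*) /\
  (forall x : V, 0 <= ip x x) /\
  (forall x : V, ip x x = 0 -> x = 0).

Definition hnorm (x : V) : R := Num.sqrt (complex.Re (ip x x)).

Definition is_complete : Prop :=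
  forall u : nat -> V,
    (forall e : R, 0 < e -> exists N : nat, forall m n : nat,
        (N <= m)%N -> (N <= n)%N -> hnorm (u m - u n) < e) ->
    exists l : V, forall e : R, 0 < e -> exists N : nat, forall n : nat,
        (N <= n)%N -> hnorm (u n - l) < e.

Definition is_hilbert : Prop := is_inner_product /\ is_complete.

Definition bounded_op (S : V -> V) : Prop :=
  (forall (a : R[i]) (x y : V), S (a *: x + y) = a *: S x + S y) /\
  (exists M : R, forall x : V, hnorm (S x) <= M * hnorm x).

Definition positive_op (A : V -> V) : Prop :=
  bounded_op A /\ (forall x : V, 0 <= ip (A x) x).

Definition is_adjoint (S S' : V -> V) : Prop :=
  forall x y : V, ip (S x) y = ip x (S' y).

Definition in_BA (A S : V -> V) : Prop :=
  bounded_op S /\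
  exists S' : V -> V, is_adjoint S S' /\
    (forall x : V, exists y : V, S' (A x) = A y).

Definition ipA (A : V -> V) (x z : V) : R[i] := ip (A x) z.

Definition ipA0 (A : V -> V) (x z : V * V) : R[i] :=
  ipA A x.1 z.1 + ipA A x.2 z.2.

Definition opmat (S T U W : V -> V) (x : V * V) : V * V :=
  (S x.1 + T x.2, U x.1 + W x.2).

End OnV.

Section DW.
Variable W : Type.
Variable sip : W -> W -> R[i].

Definition snorm (z : W) : R := Num.sqrt (complex.Re (sip z z)).

Definition dw (S : W -> W) : \bar R :=
  ereal_sup [set (Num.sqrt (complex.Re `|sip (S z) z| ^+ 2 + snorm (S z) ^+ 4))%:E
            | z in [set z | snorm z = 1]].
End DW.

End Hilbert.

From HB Require Import structures.
From mathcomp Require Import all_boot all_algebra complex.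
From mathcomp Require Import all_classical reals constructive_ereal ereal.
From mathcomp Require Import ring lra.
Import order.Order.TTheory GRing.Theory Num.Theory.

Set Implicit Arguments.
Unset Strict Implicit.
Unset Printing Implicit Defensive.

Local Open Scope ring_scope.
Local Open Scope complex_scope.

(* The map U(x, y) = ((x + y)/sqrt 2, (y - x)/sqrt 2) is a unitary of H (+) H for the
   A0-form and U^-1 [[S, T], [T, S]] U = diag(S - T, S + T); the Davis-Wielandt radius is
   invariant under such a change of variables.  With S := 0 and T := S it remains to
   compare D = diag(-S, S) with S.  At an A0-unit vector z = (x, y), the vector
   (<Dz, z>_A0, ||Dz||_A0^2) of C x R is the sum of (-<Sx, x>_A, ||Sx||_A^2) and
   (<Sy, y>_A, ||Sy||_A^2), so by Minkowski's inequality and 2-homogeneity its length is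
   at most (||x||_A^2 + ||y||_A^2) dw_A(S) = dw_A(S).  A vector x with ||x||_A = 0
   contributes nothing: it is A-orthogonal to everything, and so is Sx because S has an
   A-adjoint.  The vectors (0, x) give the reverse inequality. *)

Definition sum_form (U : Type) (K : nmodType) (B : U -> U -> K) (x z : U * U) : K :=
  B x.1 z.1 + B x.2 z.2.

(* What R(S^* A) <= R(A) provides, phrased through the form <x, z>_A alone. *)
Definition form_adjointable (K : Type) (U : Type) (B : U -> U -> K) (S : U -> U) :=
  forall v, exists w, forall u, B v (S u) = B w u.

Notation "{ 'sesquilinear' V }" := {bilinear V -> V -> _ | *%R & conjc \; *%R}
  (format "{ 'sesquilinear'  V }") : type_scope.

Section Elementary.
Variable R : rcfType.

Lemma affine_ge0_slope0 (c k : R) : (forall t, 0 <= c + t * k) -> k = 0.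
Proof.
move=> c_tk_ge0; apply/eqP/negP => /negP k_neq0.
have := c_tk_ge0 (- (c + 1) / k); rewrite mulrAC -mulrA divff // mulr1; lra.
Qed.

Lemma conj_affine_ge0_coef0 (c a b : R[i]) :
  (forall l : R[i], 0 <= c + conjc l * a + l * b) -> a = 0.
Proof.
case: c a b => c1 c2 [a1 a2] [b1 b2] ge0.
have ReP t1 t2 : 0 <= c1 + t1 * (a1 + b1) + t2 * (a2 - b2).
  by have := ge0 (t1 +i* t2); rewrite lecE /= => /andP [_]; simpc; nra.
have ImP t1 t2 : c2 + t1 * (a2 + b2) + t2 * (b1 - a1) = 0.
  by have := ge0 (t1 +i* t2); rewrite lecE /= => /andP [/eqP + _]; simpc; nra.
have ab1 : a1 + b1 = 0 by apply: (affine_ge0_slope0 (c := c1)) => t; have := ReP t 0; lra.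
have ab2 : a2 - b2 = 0 by apply: (affine_ge0_slope0 (c := c1)) => t; have := ReP 0 t; lra.
have := ImP 0 0; have := ImP 1 0; have := ImP 0 1.
by move=> *; congr (_ +i* _); lra.
Qed.

Lemma cauchy_schwarz3 (p1 q1 b1 p2 q2 b2 : R) :
  p1 * p2 + q1 * q2 + b1 * b2 <=
  Num.sqrt (p1 ^+ 2 + q1 ^+ 2 + b1 ^+ 2) * Num.sqrt (p2 ^+ 2 + q2 ^+ 2 + b2 ^+ 2).
Proof.
rewrite -sqrtrM ?addr_ge0 ?sqr_ge0 //; apply: le_trans (ler_norm _) _.
rewrite -sqrtr_sqr ler_sqrt ?mulr_ge0 ?addr_ge0 ?sqr_ge0 //.
set w := _ + _ + _.
have -> : (p1 ^+ 2 + q1 ^+ 2 + b1 ^+ 2) * (p2 ^+ 2 + q2 ^+ 2 + b2 ^+ 2) =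
    w ^+ 2 + ((p1 * q2 - q1 * p2) ^+ 2 + (p1 * b2 - b1 * p2) ^+ 2 + (q1 * b2 - b1 * q2) ^+ 2).
  by rewrite /w; ring.
by rewrite lerDl !addr_ge0 ?sqr_ge0.
Qed.

Lemma minkowski3 (p1 q1 b1 p2 q2 b2 : R) :
  Num.sqrt ((p1 + p2) ^+ 2 + (q1 + q2) ^+ 2 + (b1 + b2) ^+ 2) <=
  Num.sqrt (p1 ^+ 2 + q1 ^+ 2 + b1 ^+ 2) + Num.sqrt (p2 ^+ 2 + q2 ^+ 2 + b2 ^+ 2).
Proof.
rewrite -(ger0_norm (addr_ge0 (sqrtr_ge0 _) (sqrtr_ge0 _))) -sqrtr_sqr.
rewrite ler_sqrt ?sqr_ge0 //.
have X1_ge0 : 0 <= p1 ^+ 2 + q1 ^+ 2 + b1 ^+ 2 by rewrite !addr_ge0 ?sqr_ge0.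
have X2_ge0 : 0 <= p2 ^+ 2 + q2 ^+ 2 + b2 ^+ 2 by rewrite !addr_ge0 ?sqr_ge0.
have := cauchy_schwarz3 p1 q1 b1 p2 q2 b2.
have := sqr_sqrtr X1_ge0; have := sqr_sqrtr X2_ge0; nra.
Qed.

Lemma Re_normc_sqr (c : R[i]) : complex.Re `|c| ^+ 2 = complex.Re c ^+ 2 + complex.Im c ^+ 2.
Proof. by rewrite normc_def /= sqr_sqrtr // addr_ge0 ?sqr_ge0. Qed.

Lemma Re_realM (r : R) (z : R[i]) : complex.Re (r%:C * z) = r * complex.Re z.
Proof. by case: z => a b /=; simpc. Qed.

Lemma minkowskiC (c1 c2 : R[i]) (b1 b2 : R) :
  Num.sqrt (complex.Re `|c1 + c2| ^+ 2 + (b1 + b2) ^+ 2) <=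
  Num.sqrt (complex.Re `|c1| ^+ 2 + b1 ^+ 2) + Num.sqrt (complex.Re `|c2| ^+ 2 + b2 ^+ 2).
Proof. by rewrite !Re_normc_sqr !raddfD /=; exact: minkowski3. Qed.

End Elementary.

Section Sesquilinear.
Variables (R : rcfType) (V : lmodType R[i]) (B : {sesquilinear V}).

Lemma sesquiZl a x y : B (a *: x) y = a * B x y.
Proof. exact: linearZl_LR. Qed.

Lemma sesquiZr a x y : B x (a *: y) = conjc a * B x y.
Proof. exact: linearZr_LR. Qed.

End Sesquilinear.

Section Rotation.
Variables (R : rcfType) (V : lmodType R[i]).

Definition isqrt2 : R[i] := ((Num.sqrt 2)^-1)%:C.

Lemma conj_isqrt2 : conjc isqrt2 = isqrt2.
Proof. exact: conjc_real. Qed.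

Lemma isqrt2_sqrM2 : isqrt2 * isqrt2 * 2 = 1.
Proof.
have h : (Num.sqrt 2)^-1 * (Num.sqrt 2)^-1 * 2 = 1 :> R.
  by rewrite -invfM -expr2 sqr_sqrtr ?ler0n // mulVf.
by rewrite /isqrt2 -(rmorph_nat (real_complex R) 2) -!rmorphM h rmorph1.
Qed.

Definition rot (z : V * V) : V * V :=
  (isqrt2 *: (z.1 + z.2), isqrt2 *: (z.2 - z.1)).

Definition rotV (z : V * V) : V * V :=
  (isqrt2 *: (z.1 - z.2), isqrt2 *: (z.1 + z.2)).

Lemma rotVK : cancel rotV rot.
Proof.
case=> x y; rewrite /rot /rotV /= -!scalerDr -scalerBr !scalerA.
rewrite addrACA addNr addr0 opprB [y - x]addrC addrACA subrr add0r.
have cc2 : isqrt2 * isqrt2 + isqrt2 * isqrt2 = 1 by rewrite -isqrt2_sqrM2; ring.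
by rewrite !scalerDr -!scalerDl cc2 !scale1r.
Qed.

Lemma rot_isometry (B : {sesquilinear V}) z w :
  sum_form B (rot z) (rot w) = sum_form B z w.
Proof.
rewrite /sum_form /rot /= !sesquiZl !sesquiZr conj_isqrt2.
rewrite !linearDl !linearDr !linearNl !linearNr -[RHS]mul1r -isqrt2_sqrM2.
ring.
Qed.

End Rotation.

Section DavisWielandt.
Variable R : realType.

Definition dw_at (W : Type) (sip : W -> W -> R[i]) (S : W -> W) (z : W) : R :=
  Num.sqrt (complex.Re `|sip (S z) z| ^+ 2 + snorm sip (S z) ^+ 4).

Lemma dw_conjugate (W : Type) (sip : W -> W -> R[i]) (M D P Q : W -> W) :
    (forall z w, sip (P z) (P w) = sip z w) -> cancel Q P ->
  (forall u, M (P u) = P (D u)) -> dw sip M = dw sip D.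
Proof.
move=> P_iso QK MP; have snormP u : snorm sip (P u) = snorm sip u by rewrite /snorm P_iso.
rewrite /dw; congr ereal_sup; apply/seteqP; split=> _ [z z_unit <-].
- rewrite -(QK z) in z_unit *; exists (Q z); first by rewrite /= -snormP.
  by rewrite MP P_iso snormP.
- exists (P z); first by rewrite /= snormP.
  by rewrite MP P_iso snormP.
Qed.

Lemma rot_opmat (V : lmodType R[i]) (S T : {linear V -> V}) z :
  opmat S T T S (rot z) = rot (opmat (S \- T) \0 \0 (S \+ T) z).
Proof.
case: z => x y; rewrite /opmat /rot /= !addr0 !add0r !linearZ -!scalerDr.
congr (_ *: _, _ *: _); rewrite ?opprB !linearD !linearN.
  by rewrite [RHS]addrACA [- T x + _]addrC.
by rewrite addrACA [RHS]addrACA [T x + S y]addrC.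
Qed.

Lemma dw_opmat_sym (V : lmodType R[i]) (B : {sesquilinear V}) (S T : {linear V -> V}) :
  dw (sum_form B) (opmat S T T S) = dw (sum_form B) (opmat (S \- T) \0 \0 (S \+ T)).
Proof. exact: dw_conjugate (rot_isometry B) (@rotVK _ V) (rot_opmat S T). Qed.

Section PositiveForm.
Variables (V : lmodType R[i]) (B : {sesquilinear V}).

Lemma snormZ (k : R) x : snorm B (k%:C *: x) = `|k| * snorm B x.
Proof.
rewrite /snorm sesquiZl sesquiZr conjc_real mulrA -rmorphM Re_realM -expr2.
by rewrite sqrtrM ?sqr_ge0 // sqrtr_sqr.
Qed.

Lemma snormN x : snorm B (- x) = snorm B x.
Proof. by rewrite /snorm linearNl linearNr opprK. Qed.

Lemma sum_form0l u v : sum_form B (0, u) (0, v) = B u v.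
Proof. by rewrite /sum_form /= linear0l add0r. Qed.

Hypothesis B_ge0 : forall x, 0 <= B x x.

Lemma form_Re_ge0 x : 0 <= complex.Re (B x x).
Proof. by have := B_ge0 x; rewrite lecE => /andP[]. Qed.

Lemma snorm_sqr x : snorm B x ^+ 2 = complex.Re (B x x).
Proof. exact/sqr_sqrtr/form_Re_ge0. Qed.

Lemma snorm_sum_sqr z : snorm (sum_form B) z ^+ 2 = snorm B z.1 ^+ 2 + snorm B z.2 ^+ 2.
Proof. by rewrite /snorm /sum_form raddfD /= !sqr_sqrtr ?addr_ge0 ?form_Re_ge0. Qed.

Lemma snorm_eq0 x : snorm B x = 0 -> B x x = 0.
Proof.
move=> x0; have := snorm_sqr x; rewrite x0 expr2 mul0r => Re0.
by apply/eqP; rewrite eq_complex /= -Re0 (ger0_Im (B_ge0 x)) !eqxx.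
Qed.

Lemma form_isotropic x w : B x x = 0 -> B w x = 0.
Proof.
move=> Bxx; apply: (conj_affine_ge0_coef0 (c := B w w) (b := B x w)) => l.
have := B_ge0 (w + l *: x).
by rewrite linearDl !linearDr !sesquiZl !sesquiZr Bxx !mulr0 addr0.
Qed.

Variable S : {linear V -> V}.
Hypothesis S_adj : form_adjointable B S.

Lemma dw_at_null x : snorm B x = 0 -> dw_at B S x = 0.
Proof.
move=> /snorm_eq0 Bxx; have [w Bw] := S_adj (S x).
rewrite /dw_at /snorm (form_isotropic (S x) Bxx) Bw (form_isotropic w Bxx).
by rewrite normr0 /= sqrtr0 !exprS !mul0r addr0 sqrtr0.
Qed.

Lemma dw_atZ (k : R) x : dw_at B S (k%:C *: x) = k ^+ 2 * dw_at B S x.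
Proof.
rewrite /dw_at sesquiZr linearZ sesquiZl snormZ conjc_real mulrA -rmorphM -expr2.
rewrite normrM ger0_norm ?ler0c ?sqr_ge0 // Re_realM.
have -> : (k ^+ 2 * complex.Re `|B (S x) x|) ^+ 2 + (`|k| * snorm B (S x)) ^+ 4 =
    (k ^+ 2) ^+ 2 * (complex.Re `|B (S x) x| ^+ 2 + snorm B (S x) ^+ 4).
  by rewrite -(real_normK (num_real k)); ring.
by rewrite sqrtrM ?sqr_ge0 // sqrtr_sqr ger0_norm ?sqr_ge0.
Qed.

Lemma dw_at_le_dw x : ((dw_at B S x)%:E <= (snorm B x ^+ 2)%:E * dw B S)%E.
Proof.
have [x0|x_neq0] := eqVneq (snorm B x) 0.
  by rewrite dw_at_null // x0 expr2 mul0r mul0e.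
set t := snorm B x; have t_gt0 : 0 < t by rewrite lt0r x_neq0 sqrtr_ge0.
have unit_x : snorm B ((t^-1)%:C *: x) = 1.
  by rewrite snormZ ger0_norm ?invr_ge0 ?ltW // mulVf ?gt_eqF.
have -> : x = t%:C *: ((t^-1)%:C *: x) by rewrite scalerA -rmorphM divff ?gt_eqF // scale1r.
rewrite dw_atZ EFinM lee_wpmul2l ?lee_fin ?sqr_ge0 //.
by apply: ereal_sup_ubound; exists ((t^-1)%:C *: x).
Qed.

Lemma dw_at_diag z :
  dw_at (sum_form B) (opmat (\- S) \0 \0 S) z <= dw_at B S z.1 + dw_at B S z.2.
Proof.
case: z => x y; rewrite /dw_at -[4%N]/(2 * 2)%N !exprM.
have -> : opmat (\- S) \0 \0 S (x, y) = (- S x, S y) by rewrite /opmat /= addr0 add0r.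
have -> : sum_form B (- S x, S y) (x, y) = - B (S x) x + B (S y) y.
  by rewrite /sum_form /= linearNl.
have -> : snorm (sum_form B) (- S x, S y) ^+ 2 = snorm B (S x) ^+ 2 + snorm B (S y) ^+ 2.
  by rewrite snorm_sum_sqr snormN.
rewrite -(normrN (B (S x) x)); exact: minkowskiC.
Qed.

Lemma dw_at_diag0l x : dw_at (sum_form B) (opmat (\- S) \0 \0 S) (0, x) = dw_at B S x.
Proof. by rewrite /dw_at /opmat /snorm /= linear0 oppr0 addr0 add0r !sum_form0l. Qed.

Lemma dw_diag_opp : dw (sum_form B) (opmat (\- S) \0 \0 S) = dw B S.
Proof.
apply/le_anti/andP; split.
- apply: ge_ereal_sup => _ [z z_unit <-].
  have t1 : snorm B z.1 ^+ 2 + snorm B z.2 ^+ 2 = 1.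
    by rewrite -snorm_sum_sqr z_unit expr1n.
  apply: (@le_trans _ _ ((dw_at B S z.1 + dw_at B S z.2)%:E)).
    by rewrite lee_fin; exact: dw_at_diag.
  rewrite EFinD; apply: le_trans (leeD (dw_at_le_dw z.1) (dw_at_le_dw z.2)) _.
  by rewrite -ge0_muleDl ?lee_fin ?sqr_ge0 // -EFinD t1 mul1e.
- apply: ereal_sup_le => _ [x x_unit <-]; exists (0, x).
    by rewrite /= /snorm sum_form0l; exact: x_unit.
  exact: (congr1 EFin (dw_at_diag0l x)).
Qed.

End PositiveForm.

Lemma dw_antidiag (V : lmodType R[i]) (B : {sesquilinear V}) (S : {linear V -> V}) :
  (forall x, 0 <= B x x) -> form_adjointable B S ->
  dw (sum_form B) (opmat \0 S S \0) = dw B S.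
Proof.
move=> B_ge0 S_adj; rewrite dw_opmat_sym -(dw_diag_opp B_ge0 S_adj).
have E : opmat (\0 \- S) \0 \0 (\0 \+ S) = opmat (\- S) \0 \0 S.
  by apply: funext => -[x y]; rewrite /opmat /= sub0r !add0r.
by rewrite E.
Qed.

End DavisWielandt.

Section InnerProduct.
Variables (R : realType) (V : lmodType R[i]) (ip : V -> V -> R[i]).
Hypothesis ip_inner : is_inner_product ip.

Lemma ipA_sesquilinear (A : V -> V) :
  linear A -> bilinear_for *%R (conjc \; *%R) (ipA ip A).
Proof.
case: ip_inner => ipl [ipC _] A_lin; split=> [z a x y | z a x y] /=.
  by rewrite /ipA A_lin ipl.
by rewrite /ipA ipC ipl rmorphD rmorphM /= -!ipC.
Qed.

Lemma in_BA_form_adjointable (A S : V -> V) :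
  in_BA ip A S -> form_adjointable (ipA ip A) S.
Proof.
case: ip_inner => _ [ipC _] [_ [S' [S'_adj S'_range]]] v.
have [w Aw] := S'_range v; exists w => u.
by rewrite /ipA ipC S'_adj Aw -ipC.
Qed.

End InnerProduct.

Theorem lemma3p5 (R : realType) (V : lmodType R[i]) (ip : V -> V -> R[i])
    (A : V -> V) :
  is_hilbert ip -> positive_op ip A ->
  (forall S T : V -> V, in_BA ip A S -> in_BA ip A T ->
     dw (ipA0 ip A) (opmat S T T S) =
     dw (ipA0 ip A) (opmat (fun x => S x - T x) (fun _ => 0)
                           (fun _ => 0) (fun x => S x + T x))) /\
  (forall S : V -> V, in_BA ip A S ->
     dw (ipA0 ip A) (opmat (fun _ => 0) S S (fun _ => 0)) = dw (ipA ip A) S).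
Proof.
move=> [ip_inner _] [[A_lin _] A_ge0].
pose B : {sesquilinear V} :=
  HB.pack (ipA ip A) (bilinear_isBilinear.Build _ _ _ _ _ _ _ (ipA_sesquilinear ip_inner A_lin)).
split=> [S T [[S_lin _] _] [[T_lin _] _] | S S_BA].
  pose Sl : {linear V -> V} := HB.pack S (GRing.isLinear.Build _ _ _ _ S S_lin).
  pose Tl : {linear V -> V} := HB.pack T (GRing.isLinear.Build _ _ _ _ T T_lin).
  exact: (dw_opmat_sym B Sl Tl).
have [[S_lin _] _] := S_BA.
pose Sl : {linear V -> V} := HB.pack S (GRing.isLinear.Build _ _ _ _ S S_lin).
exact: (dw_antidiag (B := B) (S := Sl) A_ge0 (in_BA_form_adjointable ip_inner S_BA)).
Qed.
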